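(* Fix a positive $\epsilon\in\Gamma$. Let $d_0\in\mathrm{Der}_0(\mathfrak{L},\mathfrak{V})$ satisfy $d_0(L_{k\epsilon})=0$ for all $k\in\mathbb{Z}$. Then $d_0(A_p)=0$ whenever $A\in\{L,I\}$ and $p\in\Gamma$, or $A\in\{G,H\}$ and $p\in s+\Gamma$. In particular $d_0=0$.
   Context: Let $\Gamma$ be a nontrivial additive subgroup of $\mathbb{R}$, and let $s\in\mathbb{R}$ with $2s\in\Gamma$. The Lie superalgebra $\mathfrak{L}$ over $\mathbb{C}$ has basis $\{L_p,I_p,G_r,H_r\mid p\in\Gamma,\ r\in s+\Gamma\}$. Here $L_p,I_p$ are even and $G_r,H_r$ are odd. The nonzero super-brackets are $[L_p,L_q]=(p-q)L_{p+q}$, $[L_p,I_q]=(p-q)I_{p+q}$, $[L_p,G_r]=(\tfrac p2-r)G_{p+r}$, $[L_p,H_r]=(\tfrac p2-r)H_{p+r}$, $[G_r,G_t]=I_{r+t}$, $[I_p,G_r]=(p-2r)H_{p+r}$. All other brackets of basis elements vanish, apart from those forced by super-antisymmetry. Grading: - $\mathbb{Z}_s=\Gamma\cup(s+\Gamma)$, an additive subgroup of $\mathbb{R}$. - $\mathfrak{L}=\bigoplus_{p\in\mathbb{Z}_s}\mathfrak{L}_p$, where $\mathfrak{L}_p$ is spanned by those of $L_p,I_p,G_p,H_p$ that exist. - $\mathfrak{V}=\mathfrak{L}\otimes\mathfrak{L}$, with $\mathfrak{V}_r=\bigoplus_{p+q=r}\mathfrak{L}_p\otimes\mathfrak{L}_q$.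 - $\mathfrak{L}$ acts on $\mathfrak{V}$ by $x\circ(a\otimes b)=[x,a]\otimes b+(-1)^{[x][a]}a\otimes[x,b]$, where $[x]$ is parity. Derivations: - A homogeneous derivation of parity $[d]$ is a linear map $d:\mathfrak{L}\to\mathfrak{V}$ shifting parity by $[d]$ and satisfying $d([x,y])=(-1)^{[d][x]}x\circ d(y)-(-1)^{[y]([d]+[x])}y\circ d(x)$. - A derivation is a sum of an even and an odd one. - $\mathrm{Der}_0(\mathfrak{L},\mathfrak{V})$ is the set of derivations $d$ with $d(\mathfrak{L}_p)\subset\mathfrak{V}_{p}$ for all $p\in\mathbb{Z}_s$. *)

From Stdlib Require Import Reals List ZArith.
Open Scope R_scope.

(* Complex scalars: C = R x R (real part, imaginary part).  Only the
   complex vector-space operations are ever needed (all structure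
   constants are real and derivations are determined by their values
   on basis vectors). *)
Definition C : Type := (R * R)%type.
Definition C0 : C := (0, 0).
Definition Cadd (z w : C) : C := (fst z + fst w, snd z + snd w).
Definition Cscale (a : R) (z : C) : C := (a * fst z, a * snd z).

Inductive kind := KL | KI | KG | KH.

Definition parity (k : kind) : bool :=
  match k with KL | KI => false | KG | KH => true end.

Definition kind_eqb (a b : kind) : bool :=
  match a, b with
  | KL, KL | KI, KI | KG, KG | KH, KH => true
  | _, _ => false
  end.

Definition valid (Gam : R -> Prop) (s : R) (k : kind) (p : R) : Prop :=
  if parity k then Gam (p - s) else Gam p.

Definition is_add_subgroup (Gam : R -> Prop) : Prop :=
  Gam 0 /\ (forall x y, Gam x -> Gam y -> Gam (x + y)) /\ (forall x, Gam x -> Gam (- x)).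

(* Bracket of basis vectors: [X_p, Y_q] = brc X p Y q * Z_{p+q} with Z = brk X Y,
   or 0 if brk X Y = None (includes the super-antisymmetric counterparts). *)
Definition brk (a b : kind) : option kind :=
  match a, b with
  | KL, KL => Some KL
  | KL, KI => Some KI | KI, KL => Some KI
  | KL, KG => Some KG | KG, KL => Some KG
  | KL, KH => Some KH | KH, KL => Some KH
  | KG, KG => Some KI
  | KI, KG => Some KH | KG, KI => Some KH
  | _, _ => None
  end.

Definition brc (a : kind) (p : R) (b : kind) (q : R) : R :=
  match a, b with
  | KL, KL => p - q
  | KL, KI => p - q | KI, KL => p - q
  | KL, KG => p / 2 - q | KG, KL => p - q / 2
  | KL, KH => p / 2 - q | KH, KL => p - q / 2
  | KG, KG => 1
  | KI, KG => p - 2 * q | KG, KI => 2 * p - q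
  | _, _ => 0
  end.

Definition sgn (b : bool) : R := if b then -1 else 1.

(* Elements of V = L (x) L as coefficient functions on pairs of basis indices:
   v k1 r1 k2 r2 = coefficient of (k1)_{r1} (x) (k2)_{r2}. *)
Definition Vvec : Type := kind -> R -> kind -> R -> C.
Definition V0 : Vvec := fun _ _ _ _ => C0.
Definition Vadd (v w : Vvec) : Vvec := fun a r b t => Cadd (v a r b t) (w a r b t).
Definition Vscale (c : R) (v : Vvec) : Vvec := fun a r b t => Cscale c (v a r b t).

Definition isV (Gam : R -> Prop) (s : R) (v : Vvec) : Prop :=
  (exists l : list (kind * R * kind * R),
      forall a r b t, v a r b t <> C0 -> In (a, r, b, t) l) /\
  (forall a r b t, v a r b t <> C0 -> valid Gam s a r /\ valid Gam s b t).

Definition kinds : list kind := KL :: KI :: KG :: KH :: nil.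

Definition Csum (l : list C) : C := fold_right Cadd C0 l.

Definition opt_is (o : option kind) (k : kind) : bool :=
  match o with Some k' => kind_eqb k' k | None => false end.

(* Action of the basis vector x = (kx)_p on V:
   x o (a (x) b) = [x,a] (x) b + (-1)^{[x][a]} a (x) [x,b]. *)
Definition act (kx : kind) (p : R) (v : Vvec) : Vvec :=
  fun k1 r1 k2 r2 =>
    Csum (map (fun k =>
      Cadd
        (if opt_is (brk kx k) k1
         then Cscale (brc kx p k (r1 - p)) (v k (r1 - p) k2 r2) else C0)
        (if opt_is (brk kx k) k2
         then Cscale (sgn (parity kx && parity k1) * brc kx p k (r2 - p))
                     (v k1 r1 k (r2 - p)) else C0)) kinds).

(* A linear map d : L -> V, given by its values d k p on basis vectors k_p. *)
Definition Lmap : Type := kind -> R -> Vvec.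

Definition d_br (d : Lmap) (kx : kind) (p : R) (ky : kind) (q : R) : Vvec :=
  match brk kx ky with
  | Some kz => Vscale (brc kx p ky q) (d kz (p + q))
  | None => V0
  end.

Definition is_hom_der (Gam : R -> Prop) (s : R) (e : bool) (d : Lmap) : Prop :=
  (forall k p, valid Gam s k p ->
     isV Gam s (d k p) /\
     (forall a r b t, d k p a r b t <> C0 ->
        xorb (parity a) (parity b) = xorb e (parity k))) /\
  (forall kx p ky q, valid Gam s kx p -> valid Gam s ky q ->
     d_br d kx p ky q =
     Vadd (Vscale (sgn (e && parity kx)) (act kx p (d ky q)))
          (Vscale (- sgn (parity ky && xorb e (parity kx))) (act ky q (d kx p)))).

Definition Der0 (Gam : R -> Prop) (s : R) (d : Lmap) : Prop :=
  (exists d0 d1 : Lmap,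
     is_hom_der Gam s false d0 /\ is_hom_der Gam s true d1 /\
     (forall k p, valid Gam s k p -> d k p = Vadd (d0 k p) (d1 k p))) /\
  (forall k p, valid Gam s k p ->
     forall a r b t, d k p a r b t <> C0 -> r + t = p).

(** For m = kε the derivation identity for [L_m, X_q] reduces, since d(L_m) = 0,
    to d([L_m, X_q]) = L_m ∘ d(X_q).  Going from A_p to A_{p+m} with L_m and
    back with L_{-m} expresses a coefficient of d(A_p) at (r, t) through the
    coefficients at (r, t), (r + m, t - m) and (r - m, t + m).  The last two lie
    outside the finite support of d(A_p) once m is large, so the coefficient is
    killed by a quadratic polynomial in m with nonzero leading term; taking
    three such values m, 2m, 3m forces it to vanish. *)

From Stdlib Require Import Reals List ZArith.
From Stdlib Require Import Lra Psatz Classical FunctionalExtensionality.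
(* Imported after Reals, whose binomial coefficient [C] would otherwise shadow
   the complex scalars [C] of Defs. *)
From Pilot Require Import Defs.
Open Scope R_scope.

Lemma Gam_IZR_mul (Gam : R -> Prop) (x : R) :
  is_add_subgroup Gam -> Gam x -> forall k : Z, Gam (IZR k * x).
Proof.
  intros [G0 [Gadd Gopp]] Gx.
  assert (Gnat : forall n, Gam (INR n * x)).
  { induction n as [|n IH].
    - rewrite Rmult_0_l; exact G0.
    - rewrite S_INR, Rmult_plus_distr_r, Rmult_1_l; auto. }
  intros [|n|n].
  - rewrite Rmult_0_l; exact G0.
  - rewrite <- positive_nat_Z, <- INR_IZR_INZ; apply Gnat.
  - rewrite <- Pos2Z.opp_pos, opp_IZR, <- positive_nat_Z, <- INR_IZR_INZ,
      Ropp_mult_distr_l_reverse; auto.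
Qed.

Lemma exists_IZR_mul_gt (eps c : R) : 0 < eps -> exists k : Z, c < IZR k * eps.
Proof.
  intros Heps; exists (up (c / eps)).
  destruct (archimed (c / eps)) as [Hk _].
  apply (Rmult_lt_compat_r eps) in Hk; [|exact Heps].
  unfold Rdiv in Hk; rewrite Rmult_assoc, Rinv_l, Rmult_1_r in Hk; lra.
Qed.

Lemma valid_shift (Gam : R -> Prop) (s m q : R) (X : kind) :
  is_add_subgroup Gam -> Gam m -> valid Gam s X q -> valid Gam s X (m + q).
Proof.
  intros [_ [Gadd _]] Gm; unfold valid; destruct (parity X); intros Hq.
  - replace (m + q - s) with (m + (q - s)) by ring; auto.
  - auto.
Qed.

Lemma Cadd_C0_l (z : C) : Cadd C0 z = z.
Proof. destruct z; unfold Cadd, C0; simpl; f_equal; ring. Qed.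

Lemma Cadd_C0_r (z : C) : Cadd z C0 = z.
Proof. destruct z; unfold Cadd, C0; simpl; f_equal; ring. Qed.

Lemma Cadd_eq_C0_exclusive (z w : C) :
  Cadd z w = C0 -> (z <> C0 -> w = C0) -> z = C0 /\ w = C0.
Proof.
  intros Hzw Hex.
  destruct (classic (z = C0)) as [Hz|Hz].
  - split; [exact Hz|]; now rewrite <- Hzw, Hz, Cadd_C0_l.
  - exfalso; apply Hz; now rewrite <- Hzw, (Hex Hz), Cadd_C0_r.
Qed.

Lemma Cscale_eq_C0 (c : R) (z : C) : Cscale c z = C0 -> z <> C0 -> c = 0.
Proof.
  destruct z as [x y]; unfold Cscale, C0; simpl; intros E Hz.
  injection E as Ex Ey.
  destruct (Req_dec c 0) as [|Hc]; [assumption|].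
  exfalso; apply Hz; f_equal.
  - now apply (Rmult_eq_reg_l c); [rewrite Rmult_0_r|].
  - now apply (Rmult_eq_reg_l c); [rewrite Rmult_0_r|].
Qed.

Lemma Cscale_C0 (c : R) : Cscale c C0 = C0.
Proof. unfold Cscale, C0; simpl; f_equal; ring. Qed.

Lemma Cscale_Cadd (c : R) (z w : C) : Cscale c (Cadd z w) = Cadd (Cscale c z) (Cscale c w).
Proof. destruct z, w; unfold Cscale, Cadd; simpl; f_equal; ring. Qed.

Lemma Cadd_interchange (z1 z2 w1 w2 : C) :
  Cadd (Cadd z1 z2) (Cadd w1 w2) = Cadd (Cadd z1 w1) (Cadd z2 w2).
Proof. destruct z1, z2, w1, w2; unfold Cadd; simpl; f_equal; ring. Qed.

Lemma Vvec_ext (v w : Vvec) : (forall a r b t, v a r b t = w a r b t) -> v = w.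
Proof.
  intros H; do 4 (apply functional_extensionality; intro); apply H.
Qed.

Lemma Vadd_V0_r (v : Vvec) : Vadd v V0 = v.
Proof. apply Vvec_ext; intros; apply Cadd_C0_r. Qed.

Lemma Vscale_1 (v : Vvec) : Vscale 1 v = v.
Proof.
  apply Vvec_ext; intros a r b t; unfold Vscale, Cscale.
  destruct (v a r b t); simpl; f_equal; ring.
Qed.

Lemma Vscale_V0 (c : R) : Vscale c V0 = V0.
Proof. apply Vvec_ext; intros; unfold Vscale, V0, Cscale, C0; simpl; f_equal; ring. Qed.

Lemma Vscale_Vadd (c : R) (v w : Vvec) :
  Vscale c (Vadd v w) = Vadd (Vscale c v) (Vscale c w).
Proof.
  apply Vvec_ext; intros a r b t; unfold Vscale, Vadd, Cscale, Cadd.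
  destruct (v a r b t), (w a r b t); simpl; f_equal; ring.
Qed.

Lemma Csum_map_C0 (f : kind -> C) (l : list kind) :
  (forall k, f k = C0) -> Csum (map f l) = C0.
Proof.
  intros Hf; induction l as [|k l IH]; simpl; [reflexivity|].
  now rewrite IH, Hf, Cadd_C0_l.
Qed.

Lemma Csum_map_Cadd (f g : kind -> C) (l : list kind) :
  Csum (map (fun k => Cadd (f k) (g k)) l) = Cadd (Csum (map f l)) (Csum (map g l)).
Proof.
  induction l as [|k l IH]; simpl.
  - now rewrite Cadd_C0_l.
  - now rewrite IH, Cadd_interchange.
Qed.

Lemma act_V0 (X : kind) (p : R) : act X p V0 = V0.
Proof.
  apply Vvec_ext; intros k1 r1 k2 r2; apply Csum_map_C0; intros k.
  unfold V0; rewrite !Cscale_C0.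
  now destruct (opt_is _ k1), (opt_is _ k2); rewrite Cadd_C0_l.
Qed.

Lemma act_Vadd (X : kind) (p : R) (v w : Vvec) :
  act X p (Vadd v w) = Vadd (act X p v) (act X p w).
Proof.
  apply Vvec_ext; intros k1 r1 k2 r2; unfold act, Vadd.
  rewrite <- Csum_map_Cadd; f_equal; apply map_ext; intros k.
  rewrite <- Cadd_interchange; f_equal;
    (destruct (opt_is _ _); [apply Cscale_Cadd | now rewrite Cadd_C0_l]).
Qed.

Lemma act_KL (m : R) (v : Vvec) a r b t :
  act KL m v a r b t =
  Cadd (Cscale (brc KL m a (r - m)) (v a (r - m) b t))
       (Cscale (brc KL m b (t - m)) (v a r b (t - m))).
Proof.
  destruct a, b; unfold act; simpl; unfold Cadd, Cscale, C0; simpl; f_equal; ring.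
Qed.

Lemma d_br_KL (d : Lmap) (m q : R) (X : kind) :
  d_br d KL m X q = Vscale (brc KL m X q) (d X (m + q)).
Proof. now destruct X. Qed.

Lemma hom_der_KL_inner (Gam : R -> Prop) (s m q : R) (e : bool) (d : Lmap) (X : kind) :
  is_hom_der Gam s e d -> Gam m -> d KL m = V0 -> valid Gam s X q ->
  d_br d KL m X q = act KL m (d X q).
Proof.
  intros [_ Hbr] Gm Hm HX.
  rewrite (Hbr KL m X q Gm HX), Hm, act_V0, Vscale_V0, Vadd_V0_r.
  simpl parity; rewrite Bool.andb_false_r; apply Vscale_1.
Qed.

(* The even and odd parts of a derivation take values of different parity,
   so d(L_m) = 0 forces both parts to vanish on L_m. *)
Lemma Der0_KL_inner (Gam : R -> Prop) (s m q : R) (d : Lmap) (X : kind) :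
  is_add_subgroup Gam -> Der0 Gam s d -> Gam m -> d KL m = V0 -> valid Gam s X q ->
  d_br d KL m X q = act KL m (d X q).
Proof.
  intros HG [[d0 [d1 [Hd0 [Hd1 Hsum]]]] _] Gm Hm HX.
  assert (Vm : valid Gam s KL m) by exact Gm.
  assert (Hparts : forall a r b t, d0 KL m a r b t = C0 /\ d1 KL m a r b t = C0).
  { intros a r b t; apply Cadd_eq_C0_exclusive.
    - change (Vadd (d0 KL m) (d1 KL m) a r b t = V0 a r b t).
      now rewrite <- (Hsum KL m Vm), Hm.
    - intros N0; apply NNPP; intros N1.
      pose proof (proj2 (proj1 Hd0 KL m Vm) a r b t N0) as P0.
      pose proof (proj2 (proj1 Hd1 KL m Vm) a r b t N1) as P1.
      simpl in P0, P1; congruence. }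
  assert (Hd0m : d0 KL m = V0) by (apply Vvec_ext; intros; apply Hparts).
  assert (Hd1m : d1 KL m = V0) by (apply Vvec_ext; intros; apply Hparts).
  rewrite d_br_KL, (Hsum X _ (valid_shift Gam s m q X HG Gm HX)), (Hsum X q HX).
  rewrite Vscale_Vadd, act_Vadd, <- !d_br_KL.
  now rewrite (hom_der_KL_inner Gam s m q false d0 X Hd0 Gm Hd0m HX),
              (hom_der_KL_inner Gam s m q true d1 X Hd1 Gm Hd1m HX).
Qed.

Lemma list_Rabs_bound (T U : Type) (l : list (T * R * U * R)) :
  exists B, forall a r b t, In (a, r, b, t) l -> Rabs r <= B.
Proof.
  induction l as [|[[[a r] b] t] l [B HB]].
  - exists 0; intros ? ? ? ? [].
  - exists (Rmax (Rabs r) B); intros a' r' b' t' [E|E].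
    + injection E as -> -> -> ->; apply Rmax_l.
    + eapply Rle_trans; [exact (HB _ _ _ _ E) | apply Rmax_r].
Qed.

Lemma Der0_support_bounded (Gam : R -> Prop) (s p : R) (d : Lmap) (A : kind) :
  Der0 Gam s d -> valid Gam s A p ->
  exists B, forall a r b t, d A p a r b t <> C0 -> Rabs r <= B.
Proof.
  intros [[d0 [d1 [Hd0 [Hd1 Hsum]]]] _] HA.
  destruct (proj1 (proj1 (proj1 Hd0 A p HA))) as [l0 Hl0].
  destruct (proj1 (proj1 (proj1 Hd1 A p HA))) as [l1 Hl1].
  destruct (list_Rabs_bound _ _ (l0 ++ l1)) as [B HB].
  exists B; intros a r b t Hn; apply (HB a r b t), in_or_app.
  rewrite (Hsum A p HA) in Hn; unfold Vadd in Hn.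
  destruct (classic (d0 A p a r b t = C0)) as [E|E].
  - right; apply Hl1; intros E'; apply Hn; now rewrite E, E', Cadd_C0_l.
  - left; now apply Hl0.
Qed.

Definition shift_defect (A a b : kind) (p r t m : R) : R :=
  brc KL (- m) A (m + p) * brc KL m A p
  - brc KL (- m) a (r + m) * brc KL m a r
  - brc KL (- m) b (t + m) * brc KL m b t.

(* A quadratic in m: each product brc KL (-m) X (m + q) * brc KL m X q has leading
   term -2 m^2 or -3/4 m^2, so the leading coefficient is never 0. *)
Lemma shift_defect_three_roots (A a b : kind) (p r t m : R) :
  m <> 0 -> shift_defect A a b p r t m = 0 -> shift_defect A a b p r t (2 * m) = 0 ->
  shift_defect A a b p r t (3 * m) = 0 -> False.
Proof.
  intros Hm; destruct A, a, b; unfold shift_defect, brc; intros E1 E2 E3;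
  apply Hm; nra.
Qed.

Lemma shift_defect_component (cA c' ba bb ca cb x u w : R) :
  cA * u = ca * x -> cA * w = cb * x -> c' * x = ba * u + bb * w ->
  (c' * cA - ba * ca - bb * cb) * x = 0.
Proof.
  intros Hu Hw Hx.
  replace ((c' * cA - ba * ca - bb * cb) * x)
    with (cA * (c' * x) - ba * (ca * x) - bb * (cb * x)) by ring.
  rewrite Hx, <- Hu, <- Hw; ring.
Qed.

(* Here v = d(A_p) and w = d(A_{m+p}); the two identities are the actions of
   L_m and L_{-m}. *)
Lemma shift_defect_annihilates (A a b : kind) (p r t m : R) (v w : Vvec) :
  Vscale (brc KL m A p) w = act KL m v ->
  Vscale (brc KL (- m) A (m + p)) v = act KL (- m) w ->
  v a (r + m) b (t - m) = C0 -> v a (r - m) b (t + m) = C0 ->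
  Cscale (shift_defect A a b p r t m) (v a r b t) = C0.
Proof.
  intros Hup Hdown Z1 Z2.
  pose proof (f_equal (fun u => u a (r + m) b t) Hup) as K1.
  pose proof (f_equal (fun u => u a r b (t + m)) Hup) as K2.
  pose proof (f_equal (fun u => u a r b t) Hdown) as K3.
  simpl in K1, K2, K3; rewrite act_KL in K1, K2, K3; unfold Vscale in K1, K2, K3.
  replace (r + m - m) with r in K1 by ring.
  replace (t + m - m) with t in K2 by ring.
  replace (r - - m) with (r + m) in K3 by ring.
  replace (t - - m) with (t + m) in K3 by ring.
  rewrite Z1, Cscale_C0, Cadd_C0_r in K1; rewrite Z2, Cscale_C0, Cadd_C0_l in K2.
  unfold shift_defect.
  destruct (v a r b t) as [x1 x2], (w a (r + m) b t) as [u1 u2],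
    (w a r b (t + m)) as [w1 w2].
  unfold Cadd, Cscale, C0 in *; simpl in *.
  injection K1 as K1x K1y; injection K2 as K2x K2y; injection K3 as K3x K3y.
  f_equal; eapply shift_defect_component; eauto.
Qed.

Lemma shift_defect_vanishes (m p r t B : R) (d : Lmap) (A a b : kind) :
  (forall a r b t, d A p a r b t <> C0 -> Rabs r <= B) ->
  d_br d KL m A p = act KL m (d A p) ->
  d_br d KL (- m) A (m + p) = act KL (- m) (d A (m + p)) ->
  2 * B < m -> d A p a r b t <> C0 -> shift_defect A a b p r t m = 0.
Proof.
  intros Hbound Hup Hdown Hm Hne.
  pose proof (Hbound _ _ _ _ Hne) as Hr.
  assert (Far : forall r', B < Rabs r' -> forall t', d A p a r' b t' = C0).
  { intros r' Hr' t'; apply NNPP; intros N; pose proof (Hbound _ _ _ _ N); lra. }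
  rewrite !d_br_KL in Hup, Hdown.
  replace (- m + (m + p)) with p in Hdown by ring.
  apply (Cscale_eq_C0 _ (d A p a r b t)); [|exact Hne].
  apply shift_defect_annihilates with (w := d A (m + p)); try assumption;
    apply Far.
  - pose proof (Rle_abs (r + m)); pose proof (Rle_abs (- r)); rewrite Rabs_Ropp in *; lra.
  - pose proof (Rle_abs (- (r - m))); pose proof (Rle_abs r); rewrite Rabs_Ropp in *; lra.
Qed.

Theorem mainTheorem11 (Gam : R -> Prop) (s eps : R) (d : Lmap) :
  is_add_subgroup Gam -> (exists x, Gam x /\ x <> 0) -> Gam (2 * s) ->
  Gam eps -> 0 < eps ->
  Der0 Gam s d ->
  (forall k : Z, d KL (IZR k * eps) = V0) ->
  forall (A : kind) (p : R), valid Gam s A p -> d A p = V0.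
Proof.
  intros HG _ _ Geps Heps Hd HL A p HA.
  assert (inner : forall k X q, valid Gam s X q ->
            d_br d KL (IZR k * eps) X q = act KL (IZR k * eps) (d X q)).
  { intros k X q HX; apply (Der0_KL_inner Gam s); auto; apply Gam_IZR_mul; auto. }
  assert (step : forall k, d_br d KL (- (IZR k * eps)) A (IZR k * eps + p)
                          = act KL (- (IZR k * eps)) (d A (IZR k * eps + p))).
  { intros k; rewrite Ropp_mult_distr_l, <- opp_IZR; apply inner.
    apply valid_shift; auto; apply Gam_IZR_mul; auto. }
  destruct (Der0_support_bounded Gam s p d A Hd HA) as [B HB].
  apply Vvec_ext; intros a r b t; apply NNPP; intros Hne.
  destruct (exists_IZR_mul_gt eps (2 * Rabs B) Heps) as [k Hm].
  pose proof (Rle_abs B); pose proof (Rabs_pos B).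
  assert (far : forall j : Z, (1 <= j)%Z -> shift_defect A a b p r t (IZR (j * k) * eps) = 0).
  { intros j Hj; apply IZR_le in Hj; rewrite mult_IZR, Rmult_assoc.
    apply (shift_defect_vanishes _ p r t B d A a b HB); auto.
    - rewrite <- Rmult_assoc, <- mult_IZR; apply inner, HA.
    - rewrite <- Rmult_assoc, <- mult_IZR; apply step.
    - nra. }
  apply (shift_defect_three_roots A a b p r t (IZR k * eps)); [lra | ..].
  - rewrite <- (Z.mul_1_l k); apply far; lia.
  - rewrite <- Rmult_assoc, <- (mult_IZR 2); apply far; lia.
  - rewrite <- Rmult_assoc, <- (mult_IZR 3); apply far; lia.
Qed.
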